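(* Let $N\ge3$ be an integer, $(N+2)/(N-2)<p<p_{JL}$ and $\lambda>0$, and let $u_*$ be the unique radial singular solution of $u''+\frac{N-1}{r}u'+\lambda u+|u|^{p-1}u=0$. Then there exists $r_*>0$ such that $u_*(r_* )=0$ and $u_*(r)>0$ for $0<r<r_*$.
   Context: It is known (Merle–Peletier) that the equation has a unique solution $u_*$ near $r=0$ satisfying $u_*(r)=A r^{-2/(p-1)}(1+o(1))$ as $r\to0^+$, where $A=\left[\frac{2}{p-1}\left(N-2-\frac{2}{p-1}\right)\right]^{1/(p-1)}$; it is called the singular solution. The Joseph–Lundgren exponent is $p_{JL}=1+\frac{4}{N-4-2\sqrt{N-1}}$ for $N\ge11$ and $p_{JL}=\infty$ for $3\le N\le10$. *)

From Stdlib Require Import Reals Lra.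
From Coquelicot Require Import Coquelicot.
Open Scope R_scope.

(* Nonlinearity |s|^(p-1) s.  (Rpower 0 _ = 1 in Stdlib, but the factor s
   makes the value 0 at s = 0, which is the correct value.) *)
Definition nonlin (p s : R) : R := Rpower (Rabs s) (p - 1) * s.

Definition A_const (N : nat) (p : R) : R :=
  Rpower (2 / (p - 1) * (INR N - 2 - 2 / (p - 1))) (1 / (p - 1)).

(* p < p_JL, with p_JL = 1 + 4/(N-4-2 sqrt(N-1)) for N >= 11 and +oo for 3 <= N <= 10. *)
Definition below_pJL (N : nat) (p : R) : Prop :=
  (N <= 10)%nat \/ p < 1 + 4 / (INR N - 4 - 2 * sqrt (INR N - 1)).

Definition radial_solution (N : nat) (p lambda : R) (u du : R -> R) : Prop :=
  (forall r, 0 < r -> is_derive u r (du r)) /\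
  (forall r, 0 < r -> ex_derive du r) /\
  (forall r, 0 < r ->
     Derive du r + (INR N - 1) / r * du r + lambda * u r + nonlin p (u r) = 0).

(* Singular behaviour: u(r) = A r^{-2/(p-1)} (1 + o(1)) as r -> 0+,
   i.e. r^{2/(p-1)} u(r) -> A (A > 0). *)
Definition singular_at_0 (N : nat) (p : R) (u : R -> R) : Prop :=
  filterlim (fun r => Rpower r (2 / (p - 1)) * u r) (at_right 0)
            (locally (A_const N p)).

(** Positivity near [0] comes from the singular asymptotics, since [A > 0].
    It remains to see that [u] cannot stay positive on all of [(0, oo)].
    With [m = (N - 1)/2], the function [v = r^m u] satisfies
    [v'' = r^m ((m (m - 1)/r^2 - lambda) u - |u|^(p-1) u)], so wherever [u > 0]
    and [r] is large, [v'' + (lambda/2) v <= 0]. By Sturm comparison with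
    [sin (sqrt (lambda/2) (r - a))] such a [v] cannot be positive at both ends
    of a half period. The first zero is then the supremum of the initial
    interval of positivity. *)

From Stdlib Require Import Reals Lra Classical.
From Coquelicot Require Import Coquelicot.
Open Scope R_scope.

(* Stdlib's [Rpower x y = exp (y * ln x)] is positive even when [x <= 0]. *)
Lemma Rpower_gt_0 (x y : R) : 0 < Rpower x y.
Proof. apply exp_pos. Qed.

Lemma nonlin_ge_0 (p s : R) : 0 <= s -> 0 <= nonlin p s.
Proof.
  intros Hs. unfold nonlin.
  apply Rmult_le_pos; [left; apply Rpower_gt_0 | exact Hs].
Qed.

Lemma Rabs_lt_ball (x e y : R) : Rabs (y - x) < e -> ball x e y.
Proof. intros H. exact H. Qed.

Lemma is_derive_Rpower_mult (m : R) (u : R -> R) (r du : R) :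
  0 < r -> is_derive u r du ->
  is_derive (fun t => Rpower t m * u t) r (Rpower r m * (m / r * u r + du)).
Proof.
  intros Hr Hu.
  assert (Hpow : Rpower r m = Rpower r (m - 1) * r).
  { rewrite <- (Rpower_1 r) at 3 by exact Hr.
    rewrite <- Rpower_plus. f_equal. ring. }
  replace (Rpower r m * (m / r * u r + du))
    with (m * Rpower r (m - 1) * u r + Rpower r m * du)
    by (rewrite Hpow; field; lra).
  apply (Derive.is_derive_mult (fun t => Rpower t m) u); [|exact Hu].
  apply is_derive_Reals, derivable_pt_lim_power, Hr.
Qed.

(* [W = v' s - v s'] with [s = sin (k (t - a))] has [W' = (v'' + k^2 v) s <= 0]
   on the half period, while [W a = - k v a] and [W b = k v b]. *)
Lemma sturm_sine_comparison (v dv ddv : R -> R) (a k : R) :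
  0 < k ->
  (forall r, a <= r <= a + PI / k ->
     is_derive v r (dv r) /\ is_derive dv r (ddv r)) ->
  (forall r, a <= r <= a + PI / k -> ddv r + k ^ 2 * v r <= 0) ->
  v a + v (a + PI / k) <= 0.
Proof.
  intros Hk Hder Hsuper.
  set (b := a + PI / k).
  assert (Hab : a < b).
  { assert (0 < PI / k) by (apply Rdiv_lt_0_compat; [apply PI_RGT_0 | exact Hk]).
    unfold b. lra. }
  set (W := fun t => dv t * sin (k * (t - a)) - v t * (k * cos (k * (t - a)))).
  set (dW := fun t => (ddv t + k ^ 2 * v t) * sin (k * (t - a))).
  assert (HW : forall t, a <= t <= b -> derivable_pt_lim W t (dW t)).
  { intros t Ht. apply is_derive_Reals.
    destruct (Hder t Ht) as [Hv Hdv].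
    assert (Hsin : is_derive (fun t => sin (k * (t - a))) t (k * cos (k * (t - a))))
      by (auto_derive; [exact I | unfold Rminus; ring]).
    assert (Hcos : is_derive (fun t => k * cos (k * (t - a))) t
                     (- k ^ 2 * sin (k * (t - a))))
      by (auto_derive; [exact I | unfold Rminus; ring]).
    replace (dW t)
      with ((ddv t * sin (k * (t - a)) + dv t * (k * cos (k * (t - a))))
            - (dv t * (k * cos (k * (t - a))) + v t * (- k ^ 2 * sin (k * (t - a)))))
      by (unfold dW; ring).
    apply (is_derive_minus (fun t => dv t * sin (k * (t - a)))
                           (fun t => v t * (k * cos (k * (t - a))))).
    - exact (Derive.is_derive_mult _ _ _ _ _ Hdv Hsin).
    - exact (Derive.is_derive_mult _ _ _ _ _ Hv Hcos). }
  destruct (MVT_cor2 W dW a b Hab HW) as [c [Hmvt Hc]].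
  assert (HWa : W a = - k * v a).
  { unfold W. rewrite Rminus_diag, Rmult_0_r, sin_0, cos_0. ring. }
  assert (HWb : W b = k * v b).
  { unfold W. replace (k * (b - a)) with PI by (unfold b; field; lra).
    rewrite sin_PI, cos_PI. ring. }
  assert (Hsin : 0 <= sin (k * (c - a))).
  { apply sin_ge_0; [nra|].
    replace PI with (k * (b - a)) by (unfold b; field; lra). nra. }
  assert (HdW : dW c <= 0).
  { unfold dW. assert (ddv c + k ^ 2 * v c <= 0) by (apply Hsuper; unfold b in Hc; lra).
    nra. }
  assert (k * (v a + v b) <= 0) by nra.
  nra.
Qed.

Section Liouville.

Variables (N : nat) (p lambda : R) (u du : R -> R).
Hypothesis Hsol : radial_solution N p lambda u du.

Let m := (INR N - 1) / 2.

Lemma radial_solution_liouville (r : R) : 0 < r ->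
  is_derive (fun t => Rpower t m * u t) r (Rpower r m * (m / r * u r + du r)) /\
  is_derive (fun t => Rpower t m * (m / t * u t + du t)) r
    (Rpower r m * ((m * (m - 1) / r ^ 2 - lambda) * u r - nonlin p (u r))).
Proof.
  destruct Hsol as [Hu [Hdu Hode]]. intros Hr.
  split; [apply is_derive_Rpower_mult; auto|].
  assert (Hinv : is_derive (fun t => m / t) r (- m / r ^ 2))
    by (auto_derive; [lra | field; lra]).
  assert (Hw := is_derive_plus _ _ _ _ _
                  (Derive.is_derive_mult _ _ _ _ _ Hinv (Hu r Hr))
                  (Derive_correct _ _ (Hdu r Hr))).
  replace (Rpower r m * ((m * (m - 1) / r ^ 2 - lambda) * u r - nonlin p (u r)))
    with (Rpower r m * (m / r * (m / r * u r + du r)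
                        + (- m / r ^ 2 * u r + m / r * du r + Derive du r))).
  - exact (is_derive_Rpower_mult m _ r _ Hr Hw).
  - replace (Derive du r)
      with (- ((INR N - 1) / r * du r + lambda * u r + nonlin p (u r)))
      by (specialize (Hode r Hr); lra).
    unfold m. field. lra.
Qed.

Lemma radial_solution_not_positive :
  0 < lambda -> ~ (forall r, 0 < r -> 0 < u r).
Proof.
  intros Hl Hpos.
  set (k := sqrt (lambda / 2)).
  assert (Hk : 0 < k) by (apply sqrt_lt_R0; lra).
  assert (Hk2 : k ^ 2 = lambda / 2)
    by (unfold k; rewrite <- Rsqr_pow2; apply Rsqr_sqrt; lra).
  (* Beyond [a] the Liouville potential [m (m - 1) / r^2] is at most [lambda / 2]. *)
  set (c := Rabs (m * (m - 1))).
  set (a := 1 + 2 * c / lambda).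
  assert (Hc : m * (m - 1) <= c) by apply Rle_abs.
  assert (Hca : c = lambda * (a - 1) / 2) by (unfold a; field; lra).
  assert (Ha : 1 <= a).
  { unfold a. assert (0 <= 2 * c / lambda); [|lra].
    apply Rdiv_le_0_compat; [apply Rmult_le_pos; [lra | apply Rabs_pos] | exact Hl]. }
  assert (Hv : forall r, 0 < r -> 0 < Rpower r m * u r)
    by (intros r Hr; apply Rmult_lt_0_compat; [apply Rpower_gt_0 | auto]).
  enough (Rpower a m * u a + Rpower (a + PI / k) m * u (a + PI / k) <= 0).
  { assert (0 < PI / k) by (apply Rdiv_lt_0_compat; [apply PI_RGT_0 | exact Hk]).
    assert (0 < Rpower a m * u a) by (apply Hv; lra).
    assert (0 < Rpower (a + PI / k) m * u (a + PI / k)) by (apply Hv; lra).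
    lra. }
  apply (sturm_sine_comparison (fun t => Rpower t m * u t)
           (fun t => Rpower t m * (m / t * u t + du t))
           (fun t => Rpower t m * ((m * (m - 1) / t ^ 2 - lambda) * u t - nonlin p (u t)))
           a k Hk).
  - intros r Hr. apply radial_solution_liouville. lra.
  - intros r Hr.
    assert (Hq : m * (m - 1) / r ^ 2 <= lambda / 2).
    { assert (a - 1 <= r ^ 2) by nra.
      assert (m * (m - 1) <= lambda / 2 * r ^ 2) by nra.
      assert (Hr2 : r ^ 2 * / r ^ 2 = 1) by (field; lra).
      assert (0 < / r ^ 2) by (apply Rinv_0_lt_compat; nra).
      unfold Rdiv. nra. }
    assert (0 < Rpower r m) by apply Rpower_gt_0.
    assert (0 < u r) by (apply Hpos; lra).
    assert (0 <= nonlin p (u r)) by (apply nonlin_ge_0; lra).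
    assert ((m * (m - 1) / r ^ 2 - lambda / 2) * u r - nonlin p (u r) <= 0) by nra.
    rewrite Hk2. nra.
Qed.

End Liouville.

Lemma singular_at_0_pos_near_0 (N : nat) (p : R) (u : R -> R) :
  singular_at_0 N p u -> at_right 0 (fun r => 0 < u r).
Proof.
  intros Hsing.
  apply (filter_imp (fun r => 0 < Rpower r (2 / (p - 1)) * u r)).
  - intros r Hr. assert (0 < Rpower r (2 / (p - 1))) by apply Rpower_gt_0. nra.
  - exact (Hsing _ (open_gt 0 _ (Rpower_gt_0 _ _))).
Qed.

Lemma first_zero_after_positivity (u : R -> R) (b : R) :
  (forall r, 0 < r -> continuous u r) ->
  at_right 0 (fun r => 0 < u r) ->
  0 < b -> u b <= 0 ->
  exists rs, 0 < rs /\ u rs = 0 /\ (forall r, 0 < r < rs -> 0 < u r).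
Proof.
  intros Hcont [d Hd] Hb Hub.
  set (E := fun x => 0 < x /\ forall y, 0 < y <= x -> 0 < u y).
  assert (HEd : E (d / 2)).
  { split; [apply Rdiv_lt_0_compat; [apply cond_pos | lra]|].
    intros y Hy. apply Hd; [|lra]. apply Rabs_lt_ball.
    rewrite Rminus_0_r, Rabs_right by lra. assert (0 < d) by apply cond_pos. lra. }
  assert (HEb : forall x, E x -> x <= b).
  { intros x [Hx HEx]. apply Rnot_lt_le. intros Hbx.
    assert (0 < u b) by (apply HEx; lra). lra. }
  destruct (completeness E) as [rs [Hub_rs Hlub_rs]];
    [exists b; exact HEb | exists (d / 2); exact HEd |].
  assert (Hrs : d / 2 <= rs) by (apply Hub_rs, HEd).
  assert (Hrs_pos : 0 < rs) by (destruct HEd; lra).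
  assert (Hbelow : forall r, 0 < r < rs -> 0 < u r).
  { intros r Hr.
    destruct (classic (exists x, E x /\ r < x)) as [[x [[_ HEx] Hrx]] | Hnone].
    - apply HEx. lra.
    - assert (rs <= r); [|lra].
      apply Hlub_rs. intros x Hx. apply Rnot_lt_le. intros Hrx. apply Hnone. eauto. }
  exists rs. split; [exact Hrs_pos|]. split; [|exact Hbelow].
  destruct (Rtotal_order (u rs) 0) as [Hneg | [Hzero | Hposrs]];
    [exfalso | exact Hzero | exfalso].
  - destruct (Hcont rs Hrs_pos _ (open_lt 0 _ Hneg)) as [e He].
    assert (He_pos : 0 < e) by apply cond_pos.
    set (y := Rmax (rs / 2) (rs - e / 2)).
    assert (Hy : rs / 2 <= y /\ rs - e / 2 <= y) by (split; [apply Rmax_l | apply Rmax_r]).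
    assert (Hyrs : y < rs) by (apply Rmax_lub_lt; lra).
    assert (u y < 0) by (apply He, Rabs_lt_ball; rewrite Rabs_left; lra).
    assert (0 < u y) by (apply Hbelow; lra). lra.
  - destruct (Hcont rs Hrs_pos _ (open_gt 0 _ Hposrs)) as [e He].
    assert (He_pos : 0 < e) by apply cond_pos.
    assert (E (rs + e / 2)).
    { split; [lra|]. intros y Hy.
      destruct (Rlt_or_le y rs); [apply Hbelow; lra|].
      apply He, Rabs_lt_ball. rewrite Rabs_right; lra. }
    assert (rs + e / 2 <= rs) by (apply Hub_rs; assumption). lra.
Qed.

Theorem proposition3p2 (N : nat) (p lambda : R) (u du : R -> R) :
  (3 <= N)%nat ->
  (INR N + 2) / (INR N - 2) < p ->
  below_pJL N p ->
  0 < lambda ->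
  radial_solution N p lambda u du ->
  singular_at_0 N p u ->
  exists rs : R, 0 < rs /\ u rs = 0 /\ (forall r, 0 < r < rs -> 0 < u r).
Proof.
  intros _ _ _ Hlambda Hsol Hsing.
  destruct (classic (exists b, 0 < b /\ u b <= 0)) as [[b [Hb Hub]] | Hnone].
  - apply (first_zero_after_positivity u b);
      [| exact (singular_at_0_pos_near_0 N p u Hsing) | exact Hb | exact Hub].
    intros r Hr. apply (ex_derive_continuous (V := R_NormedModule) u).
    exists (du r). apply Hsol, Hr.
  - exfalso. apply (radial_solution_not_positive N p lambda u du Hsol Hlambda).
    intros r Hr. apply Rnot_le_lt. intros Hur. apply Hnone. eauto.
Qed.
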